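(* Let $X,Y$ be real normed linear spaces, $m\ge1$, $n\ge 2$ integers, and $L:X^m\to Y$ a continuous symmetric $m$-linear mapping with $\widehat L\ne 0$. Then \[\left(\frac{\|L\|_{(n)}}{\|\widehat{L}\|}\right)^{1/m}\le \sqrt{n}.\] Moreover, for $n=2$ and $m$ odd, the inequality $\left(\|L\|_{(2)}/\|\widehat{L}\|\right)^{1/m}<\sqrt2$ is strict.
   Context: For real normed spaces $X,Y$, a continuous symmetric $m$-linear map $L:X^m\to Y$ has associated $m$-homogeneous polynomial $\widehat{L}(x)=L(x,\ldots,x)$, with $\|\widehat{L}\|=\sup\{\|\widehat{L}(x)\|:\|x\|\le 1\}$. The notation $L(x_1^{k_1}\cdots x_n^{k_n})$ means $L$ evaluated at the $m$-tuple in which each $x_i$ appears $k_i$ times ($k_1+\cdots+k_n=m$, $k_i\ge 0$ integers). Define \[\|L\|_{(n)}=\sup_{k_1+\cdots+k_n=m}\ \sup\{\|L(x_1^{k_1}\cdots x_n^{k_n})\|:\|x_1\|\le 1,\ldots,\|x_n\|\le 1\}.\] *)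

From Stdlib Require Import Reals Lra Lia List.
Import ListNotations.
Open Scope R_scope.

Record NormedSpace := mkNormedSpace {
  carrier :> Type;
  vzero : carrier;
  vadd : carrier -> carrier -> carrier;
  vopp : carrier -> carrier;
  vscal : R -> carrier -> carrier;
  vnorm : carrier -> R;
  vadd_assoc : forall x y z, vadd x (vadd y z) = vadd (vadd x y) z;
  vadd_comm : forall x y, vadd x y = vadd y x;
  vadd_0 : forall x, vadd x vzero = x;
  vadd_opp : forall x, vadd x (vopp x) = vzero;
  vscal_1 : forall x, vscal 1 x = x;
  vscal_assoc : forall a b x, vscal a (vscal b x) = vscal (a * b) x;
  vscal_distr_v : forall a x y, vscal a (vadd x y) = vadd (vscal a x) (vscal a y);
  vscal_distr_s : forall a b x, vscal (a + b) x = vadd (vscal a x) (vscal b x);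
  vnorm_eq0 : forall x, vnorm x = 0 -> x = vzero;
  vnorm_scal : forall a x, vnorm (vscal a x) = Rabs a * vnorm x;
  vnorm_triangle : forall x y, vnorm (vadd x y) <= vnorm x + vnorm y
}.

Arguments vzero {n}.
Arguments vadd {n}.
Arguments vopp {n}.
Arguments vscal {n}.
Arguments vnorm {n}.

Definition vsub {X : NormedSpace} (x y : X) : X := vadd x (vopp y).

(* An m-linear map X^m -> Y is represented as L : (nat -> X) -> Y,
   where only the arguments at indices 0..m-1 matter. *)
Definition upd {X : Type} (f : nat -> X) (j : nat) (x : X) : nat -> X :=
  fun i => if Nat.eqb i j then x else f i.

Definition depends_on_first (X Y : NormedSpace) (m : nat) (L : (nat -> X) -> Y) :=
  forall f g : nat -> X, (forall i, (i < m)%nat -> f i = g i) -> L f = L g.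

Definition multilinear (X Y : NormedSpace) (m : nat) (L : (nat -> X) -> Y) :=
  forall (f : nat -> X) (j : nat) (a : R) (x y : X), (j < m)%nat ->
    L (upd f j (vadd (vscal a x) y)) = vadd (vscal a (L (upd f j x))) (L (upd f j y)).

Definition symmetric_map (X Y : NormedSpace) (m : nat) (L : (nat -> X) -> Y) :=
  forall sigma : nat -> nat,
    (forall i, (i < m)%nat -> (sigma i < m)%nat) ->
    (forall i j, (i < m)%nat -> (j < m)%nat -> sigma i = sigma j -> i = j) ->
    forall f : nat -> X, L (fun i => f (sigma i)) = L f.

Definition continuous_map (X Y : NormedSpace) (m : nat) (L : (nat -> X) -> Y) :=
  forall (f : nat -> X) (eps : R), 0 < eps ->
    exists delta, 0 < delta /\
      forall g : nat -> X, (forall i, (i < m)%nat -> vnorm (vsub (g i) (f i)) < delta) ->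
        vnorm (vsub (L g) (L f)) < eps.

Definition is_csm (X Y : NormedSpace) (m : nat) (L : (nat -> X) -> Y) :=
  depends_on_first X Y m L /\ multilinear X Y m L /\
  symmetric_map X Y m L /\ continuous_map X Y m L.

Definition hat {X Y : NormedSpace} (L : (nat -> X) -> Y) (x : X) : Y :=
  L (fun _ => x).

Definition hat_norm_set {X Y : NormedSpace} (L : (nat -> X) -> Y) (r : R) : Prop :=
  exists x : X, vnorm x <= 1 /\ r = vnorm (hat L x).

(* the m-tuple (x_1^{k_1} ... x_n^{k_n}): k_1 copies of x_1, then k_2 copies of x_2, ... *)
Definition block_tuple {X : NormedSpace} (xs : list X) (ks : list nat) : nat -> X :=
  fun i => nth i (flat_map (fun p => repeat (fst p) (snd p)) (combine xs ks)) vzero.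

(* the set whose sup is ||L||_(n) *)
Definition n_norm_set {X Y : NormedSpace} (m n : nat) (L : (nat -> X) -> Y) (r : R) : Prop :=
  exists (ks : list nat) (xs : list X),
    length ks = n /\ length xs = n /\ list_sum ks = m /\
    Forall (fun x => vnorm x <= 1) xs /\
    r = vnorm (L (block_tuple xs ks)).

From Stdlib Require Import Reals Lra Lia List FunctionalExtensionality.
From mathcomp Require all_boot all_order all_algebra.
From mathcomp Require all_classical all_reals all_analysis.
From mathcomp Require Rstruct Rstruct_topology.
Import ListNotations.
Open Scope R_scope.

(* Let K = ||hat L||.  The heart of the proof is Kellogg's theorem for the
   symmetric m-linear form obtained by restricting L to the span of vectors
   y_0, ..., y_(n-1) with Euclidean coordinates: if |hat L (sum_i t_i y_i)| <= M
   for every unit vector t of R^n, then |L(sum_i u_1i y_i, ..., sum_i u_mi y_i)| <= M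
   for all unit vectors u_1, ..., u_m.  It is proved by an extremal argument: by
   compactness pick a maximiser u which, among all maximisers, also maximises
   |u_1 + ... + u_m|^2; sign flips and polarization in two slots then force all
   the u_j to be equal.

   Applied to y_i = alpha_i x_i (x_i in the unit ball, alpha_i >= 0), to the
   frame of standard basis vectors selected by the blocks of (x_1^k_1 ... x_n^k_n),
   and combined with Cauchy-Schwarz, it gives the block estimate
       prod_i alpha_i^k_i |L(x_1^k_1 ... x_n^k_n)| <= K |alpha|^m.
   Unit weights yield ||L||_(n) <= n^(m/2) K.  For n = 2 the weights
   alpha_i = sqrt k_i together with the integer inequality
   m^m + 1 <= 2^m k0^k0 k1^k1 (m odd; a strict weighted AM-GM) give the uniform
   bound ||L||_(2) <= sqrt (2^m m^m / (m^m + 1)) K < 2^(m/2) K. *)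

Arguments vadd_assoc {n}. Arguments vadd_comm {n}. Arguments vadd_0 {n}.
Arguments vadd_opp {n}. Arguments vscal_1 {n}. Arguments vscal_assoc {n}.
Arguments vscal_distr_v {n}. Arguments vscal_distr_s {n}. Arguments vnorm_eq0 {n}.
Arguments vnorm_scal {n}. Arguments vnorm_triangle {n}.

Lemma Rabs_minus_one : Rabs (-1) = 1.
Proof. rewrite Rabs_left; lra. Qed.

Section VectorAlgebra.
Variable X : NormedSpace.
Implicit Types x y z : X.

Lemma vadd_0l x : vadd vzero x = x.
Proof. rewrite vadd_comm; apply vadd_0. Qed.

Lemma vadd_cancel_l x y z : vadd x y = vadd x z -> y = z.
Proof.
  intro H.
  assert (E : forall w, vadd (vopp x) (vadd x w) = w).
  { intro w. rewrite vadd_assoc, (vadd_comm (vopp x) x), vadd_opp. apply vadd_0l. }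
  rewrite <- (E y), <- (E z), H. reflexivity.
Qed.

Lemma vscal_0 x : vscal 0 x = vzero.
Proof.
  apply (vadd_cancel_l (vscal 0 x)). rewrite vadd_0, <- vscal_distr_s.
  f_equal. ring.
Qed.

Lemma vscal_zero a : vscal a (@vzero X) = vzero.
Proof. rewrite <- (vscal_0 vzero), vscal_assoc, Rmult_0_r. reflexivity. Qed.

Lemma vopp_scal x : vopp x = vscal (-1) x.
Proof.
  apply (vadd_cancel_l x). rewrite vadd_opp.
  rewrite <- (vscal_1 x) at 1. rewrite <- vscal_distr_s, Rplus_opp_r, vscal_0.
  reflexivity.
Qed.

Lemma vnorm_zero : vnorm (@vzero X) = 0.
Proof. rewrite <- (vscal_0 vzero), vnorm_scal, Rabs_R0. ring. Qed.

Lemma vnorm_opp x : vnorm (vopp x) = vnorm x.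
Proof. rewrite vopp_scal, vnorm_scal, Rabs_minus_one. ring. Qed.

Lemma vnorm_nonneg x : 0 <= vnorm x.
Proof.
  pose proof (vnorm_triangle x (vopp x)) as H.
  rewrite vadd_opp, vnorm_zero, vnorm_opp in H. lra.
Qed.

Lemma vnorm_pos x : x <> vzero -> 0 < vnorm x.
Proof.
  intro Hx. destruct (vnorm_nonneg x) as [H|H]; [exact H|].
  exfalso. apply Hx, vnorm_eq0. auto.
Qed.

Lemma vsub_add x y : vadd (vsub x y) y = x.
Proof. unfold vsub. rewrite <- vadd_assoc, (vadd_comm (vopp y)), vadd_opp. apply vadd_0. Qed.

Lemma vnorm_vsub_sym x y : vnorm (vsub y x) = vnorm (vsub x y).
Proof.
  assert (E : vsub y x = vscal (-1) (vsub x y)).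
  { unfold vsub. rewrite !vopp_scal, vscal_distr_v, vscal_assoc, vadd_comm.
    f_equal. replace (-1 * -1) with 1 by ring. symmetry. apply vscal_1. }
  rewrite E, vnorm_scal, Rabs_minus_one. ring.
Qed.

Lemma vnorm_rev x y : Rabs (vnorm x - vnorm y) <= vnorm (vsub x y).
Proof.
  pose proof (vnorm_triangle (vsub x y) y) as H1. rewrite vsub_add in H1.
  pose proof (vnorm_triangle (vsub y x) x) as H2. rewrite vsub_add, vnorm_vsub_sym in H2.
  apply Rabs_le; lra.
Qed.

Lemma vswap4 x y z w : vadd (vadd x y) (vadd z w) = vadd (vadd x z) (vadd y w).
Proof.
  rewrite <- !vadd_assoc. f_equal. rewrite !vadd_assoc. f_equal. apply vadd_comm.
Qed.

End VectorAlgebra.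

Fixpoint rsum (k : nat) (f : nat -> R) : R :=
  match k with O => 0 | S k => rsum k f + f k end.

Fixpoint rprod (k : nat) (b : nat -> R) : R :=
  match k with O => 1 | S k => rprod k b * b k end.

Lemma rsum_ext k f g : (forall i, (i < k)%nat -> f i = g i) -> rsum k f = rsum k g.
Proof.
  induction k; intro H; simpl; [reflexivity|].
  rewrite IHk by (intros; apply H; lia). rewrite H by lia. reflexivity.
Qed.

Lemma rsum_lin k a f g : rsum k (fun i => a * f i + g i) = a * rsum k f + rsum k g.
Proof. induction k; simpl; [ring| rewrite IHk; ring]. Qed.

Lemma rsum_scal k a f : rsum k (fun i => a * f i) = a * rsum k f.
Proof. induction k; simpl; [ring| rewrite IHk; ring]. Qed.

Lemma rsum_plus k f g : rsum k (fun i => f i + g i) = rsum k f + rsum k g.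
Proof. induction k; simpl; [ring| rewrite IHk; ring]. Qed.

Lemma rsum_const k c : rsum k (fun _ => c) = INR k * c.
Proof. induction k; [simpl; ring|]. cbn [rsum]. rewrite IHk, S_INR. ring. Qed.

Lemma rsum_nonneg k f : (forall i, (i < k)%nat -> 0 <= f i) -> 0 <= rsum k f.
Proof.
  induction k; intro H; simpl; [lra|].
  pose proof (H k ltac:(lia)). pose proof (IHk ltac:(intros; apply H; lia)). lra.
Qed.

Lemma rsum_le k f g : (forall i, (i < k)%nat -> f i <= g i) -> rsum k f <= rsum k g.
Proof.
  induction k; intro H; simpl; [lra|].
  pose proof (H k ltac:(lia)). pose proof (IHk ltac:(intros; apply H; lia)). lra.
Qed.

Lemma rsum_term_le k f i :
  (forall l, (l < k)%nat -> 0 <= f l) -> (i < k)%nat -> f i <= rsum k f.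
Proof.
  induction k; intros H0 Hi; [lia|]. simpl.
  assert (0 <= rsum k f) by (apply rsum_nonneg; intros; apply H0; lia).
  destruct (Nat.eq_dec i k); [subst; lra|].
  assert (f i <= rsum k f) by (apply IHk; [intros; apply H0; lia|lia]).
  pose proof (H0 k ltac:(lia)). lra.
Qed.

Lemma rsum_nonneg_zero k f :
  (forall i, (i < k)%nat -> 0 <= f i) -> rsum k f = 0 -> forall i, (i < k)%nat -> f i = 0.
Proof.
  intros H0 H i Hi. pose proof (rsum_term_le k f i H0 Hi). pose proof (H0 i Hi). lra.
Qed.

Lemma rsum_sq_nonneg k f : 0 <= rsum k (fun i => f i * f i).
Proof. apply rsum_nonneg; intros; apply Rle_0_sqr. Qed.

Lemma rsum_sq_zero k f : rsum k (fun i => f i * f i) <= 0 -> forall i, (i < k)%nat -> f i = 0.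
Proof.
  intros H i Hi. pose proof (rsum_sq_nonneg k f).
  assert (E := rsum_nonneg_zero k (fun i => f i * f i) (fun i _ => Rle_0_sqr (f i))
                 ltac:(lra) i Hi).
  simpl in E. nra.
Qed.

Lemma rsum_single k i c : (i < k)%nat -> rsum k (fun l => if Nat.eqb l i then c else 0) = c.
Proof.
  induction k; intro Hi; [lia|]. simpl. destruct (Nat.eqb_spec k i).
  - subst. rewrite (rsum_ext _ _ (fun _ => 0)), rsum_const; [ring|].
    intros l Hl. destruct (Nat.eqb_spec l i); [lia|auto].
  - rewrite IHk by lia. ring.
Qed.

Lemma rsum_quad k f g c : rsum k (fun i => (f i + c * g i) * (f i + c * g i)) =
  rsum k (fun i => f i * f i) + 2 * c * rsum k (fun i => f i * g i)
  + c * c * rsum k (fun i => g i * g i).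
Proof. induction k; simpl; [ring|]. rewrite IHk. ring. Qed.

Lemma cauchy_schwarz_unit k a t : rsum k (fun i => t i * t i) = 1 ->
  rsum k (fun i => a i * t i) * rsum k (fun i => a i * t i) <= rsum k (fun i => a i * a i).
Proof.
  intro Ht. set (C := rsum k (fun i => a i * t i)).
  pose proof (rsum_quad k a t (- C)) as E.
  pose proof (rsum_sq_nonneg k (fun i => a i + - C * t i)) as H. simpl in H.
  rewrite E, Ht in H. fold C in H. nra.
Qed.

Lemma rprod_const k c : rprod k (fun _ => c) = c ^ k.
Proof. induction k; simpl; [reflexivity| rewrite IHk; ring]. Qed.

Lemma rprod_ext k f g : (forall j, (j < k)%nat -> f j = g j) -> rprod k f = rprod k g.
Proof.
  induction k; intro H; [reflexivity|]. simpl.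
  rewrite IHk by (intros; apply H; lia). rewrite H by lia. reflexivity.
Qed.

Lemma rprod_nonneg k f : (forall j, (j < k)%nat -> 0 <= f j) -> 0 <= rprod k f.
Proof.
  induction k; intro H; simpl; [lra|].
  apply Rmult_le_pos; [apply IHk; intros; apply H; lia| apply H; lia].
Qed.

Lemma rprod_split a b f : rprod (a + b) f = rprod a f * rprod b (fun j => f (a + j)%nat).
Proof.
  induction b.
  - rewrite Nat.add_0_r. simpl. ring.
  - rewrite Nat.add_succ_r. simpl. rewrite IHb. ring.
Qed.

Section Combinations.
Variable X : NormedSpace.

Fixpoint vsum (k : nat) (g : nat -> X) : X :=
  match k with O => vzero | S k => vadd (vsum k g) (g k) end.

Definition comb (ys : nat -> X) (k : nat) (t : nat -> R) : X :=
  vsum k (fun i => vscal (t i) (ys i)).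

Lemma comb_lin ys k a s t :
  comb ys k (fun i => a * s i + t i) = vadd (vscal a (comb ys k s)) (comb ys k t).
Proof.
  unfold comb; induction k as [|k IH]; simpl.
  - rewrite vscal_zero, vadd_0; reflexivity.
  - rewrite IH, vscal_distr_v, vswap4. f_equal.
    rewrite vscal_distr_s, vscal_assoc. reflexivity.
Qed.

Lemma comb_ext ys k s t : (forall i, (i < k)%nat -> s i = t i) -> comb ys k s = comb ys k t.
Proof.
  unfold comb; induction k as [|k IH]; intro H; simpl; [reflexivity|].
  rewrite IH by (intros; apply H; lia). rewrite (H k) by lia. reflexivity.
Qed.

Lemma comb_zero ys k t : (forall i, (i < k)%nat -> t i = 0) -> comb ys k t = vzero.
Proof.
  unfold comb; induction k; intro H; simpl; [reflexivity|].
  rewrite IHk by (intros; apply H; lia). rewrite H, vscal_0, vadd_0 by lia. reflexivity.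
Qed.

Lemma comb_sub ys k s t : vsub (comb ys k s) (comb ys k t) = comb ys k (fun i => -1 * t i + s i).
Proof. rewrite comb_lin. unfold vsub. rewrite vopp_scal, vadd_comm. reflexivity. Qed.

Lemma comb_scal ys k a s : comb ys k (fun i => a * s i) = vscal a (comb ys k s).
Proof.
  rewrite <- (vadd_0 (vscal a (comb ys k s))), <- (comb_zero ys k (fun _ => 0)) by auto.
  rewrite <- comb_lin. apply comb_ext. intros; ring.
Qed.

Lemma comb_norm ys k t : vnorm (comb ys k t) <= rsum k (fun i => Rabs (t i) * vnorm (ys i)).
Proof.
  unfold comb; induction k as [|k IH]; simpl.
  - rewrite vnorm_zero; lra.
  - eapply Rle_trans; [apply vnorm_triangle|]. rewrite vnorm_scal. lra.
Qed.

Lemma comb_S ys k t : comb ys (S k) t = vadd (comb ys k t) (vscal (t k) (ys k)).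
Proof. reflexivity. Qed.

Lemma comb_basis ys k i : (i < k)%nat -> comb ys k (fun l => if Nat.eqb l i then 1 else 0) = ys i.
Proof.
  intro Hi. induction k as [|k IH]; [lia|]. rewrite comb_S.
  destruct (Nat.eqb_spec k i).
  - subst. rewrite vscal_1, comb_zero, vadd_0l; [reflexivity|].
    intros l Hl. destruct (Nat.eqb_spec l i); [lia|reflexivity].
  - rewrite IH by lia. rewrite vscal_0. apply vadd_0.
Qed.

End Combinations.

Arguments comb {X}.

Lemma rsum_sq_normalize k s : 0 < rsum k (fun i => s i * s i) ->
  rsum k (fun i => (/ sqrt (rsum k (fun j => s j * s j)) * s i)
                   * (/ sqrt (rsum k (fun j => s j * s j)) * s i)) = 1.
Proof.
  set (q := rsum k (fun j => s j * s j)). intro Hq.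
  assert (Hc : 0 < sqrt q) by (apply sqrt_lt_R0; lra).
  rewrite (rsum_ext _ _ (fun i => (/ sqrt q * / sqrt q) * (s i * s i))) by (intros; ring).
  rewrite rsum_scal. fold q. rewrite <- (sqrt_sqrt q) at 3 by lra. field. lra.
Qed.

Lemma upd_same {T : Type} (f : nat -> T) j : upd f j (f j) = f.
Proof.
  apply functional_extensionality; intro i. unfold upd.
  destruct (Nat.eqb_spec i j); subst; reflexivity.
Qed.

Section Multilinear.
Variables (X Y : NormedSpace) (m : nat) (L : (nat -> X) -> Y).
Hypothesis hdep : depends_on_first X Y m L.
Hypothesis hml : multilinear X Y m L.

Lemma ml_zero f j : (j < m)%nat -> L (upd f j vzero) = vzero.
Proof.
  intro Hj. pose proof (hml f j 1 vzero vzero Hj) as H.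
  rewrite vscal_zero, vadd_0, vscal_1 in H.
  apply (vadd_cancel_l _ (L (upd f j vzero))). rewrite <- H, vadd_0. reflexivity.
Qed.

Lemma ml_scal f j a x : (j < m)%nat -> L (upd f j (vscal a x)) = vscal a (L (upd f j x)).
Proof.
  intro Hj. pose proof (hml f j a x vzero Hj) as H.
  rewrite vadd_0, ml_zero, vadd_0 in H by exact Hj. exact H.
Qed.

Lemma ml_scal_prefix (b : nat -> R) (f : nat -> X) p : (p <= m)%nat ->
  L (fun j => if Nat.ltb j p then vscal (b j) (f j) else f j) = vscal (rprod p b) (L f).
Proof.
  induction p as [|p IH]; intro Hp; simpl.
  - rewrite vscal_1. reflexivity.
  - set (g := fun j => if Nat.ltb j p then vscal (b j) (f j) else f j).
    assert (E : (fun j => if Nat.ltb j (S p) then vscal (b j) (f j) else f j)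
                = upd g p (vscal (b p) (f p))).
    { apply functional_extensionality; intro i. unfold upd, g.
      destruct (Nat.eqb_spec i p); destruct (Nat.ltb_spec i (S p)), (Nat.ltb_spec i p);
        subst; auto; lia. }
    assert (E2 : upd g p (f p) = g).
    { apply functional_extensionality; intro i. unfold upd, g.
      destruct (Nat.eqb_spec i p); [subst; rewrite Nat.ltb_irrefl|]; reflexivity. }
    rewrite E, ml_scal, E2 by lia. unfold g. rewrite IH by lia.
    rewrite vscal_assoc. f_equal. ring.
Qed.

Lemma hat_scal c x : hat L (vscal c x) = vscal (c ^ m) (hat L x).
Proof.
  unfold hat. rewrite <- rprod_const, <- (ml_scal_prefix (fun _ => c) (fun _ => x) m) by lia.
  apply hdep. intros i Hi. rewrite (proj2 (Nat.ltb_lt i m) Hi). reflexivity.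
Qed.

Lemma hat_zero : (1 <= m)%nat -> hat L vzero = vzero.
Proof.
  intro Hm. rewrite <- (vscal_0 _ vzero), hat_scal, pow_i by lia. apply vscal_0.
Qed.

Lemma hat_norm_nonneg K : (1 <= m)%nat -> is_lub (hat_norm_set L) K -> 0 <= K.
Proof.
  intros Hm HK. apply (proj1 HK). exists vzero.
  rewrite hat_zero, !vnorm_zero by exact Hm. split; [lra|reflexivity].
Qed.

Lemma hat_bound K : (1 <= m)%nat -> is_lub (hat_norm_set L) K ->
  forall z, vnorm (hat L z) <= K * vnorm z ^ m.
Proof.
  intros Hm HK z. pose proof (hat_norm_nonneg K Hm HK) as HK0.
  destruct (Req_dec (vnorm z) 0) as [H0|H0].
  - apply vnorm_eq0 in H0. subst.
    rewrite hat_zero, !vnorm_zero, pow_i by (auto; lia). lra.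
  - pose proof (vnorm_nonneg _ z) as Hz0. assert (Hz : 0 < vnorm z) by lra.
    assert (Hi : 0 < / vnorm z) by (apply Rinv_0_lt_compat; lra).
    assert (H1 : vnorm (hat L (vscal (/ vnorm z) z)) <= K).
    { apply (proj1 HK). exists (vscal (/ vnorm z) z). split; [|reflexivity].
      rewrite vnorm_scal, Rabs_right, Rinv_l by lra. lra. }
    rewrite hat_scal, vnorm_scal, Rabs_right, pow_inv in H1 by (apply Rle_ge, pow_le; lra).
    assert (Hp : 0 < vnorm z ^ m) by (apply pow_lt; lra).
    apply (Rmult_le_compat_r (vnorm z ^ m)) in H1; [|lra].
    rewrite Rmult_comm, <- Rmult_assoc, Rinv_r, Rmult_1_l in H1 by lra. exact H1.
Qed.

Lemma hat_norm_pos K : (1 <= m)%nat -> is_lub (hat_norm_set L) K ->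
  (exists x, hat L x <> vzero) -> 0 < K.
Proof.
  intros Hm HK [x Hx].
  pose proof (hat_bound K Hm HK x) as Hb. pose proof (vnorm_pos _ _ Hx) as Hp.
  pose proof (pow_le (vnorm x) m (vnorm_nonneg _ x)).
  destruct (hat_norm_nonneg K Hm HK) as [HK0|HK0]; [exact HK0|]. subst. lra.
Qed.

End Multilinear.

(** Real functions of finitely many real variables, represented as functions
    on [nat -> R] that only look at the first [d] coordinates. *)
Definition cont_on (d : nat) (F : (nat -> R) -> R) :=
  forall (v : nat -> R) (eps : R), 0 < eps ->
  exists del, 0 < del /\ forall w, (forall i, (i < d)%nat -> Rabs (w i - v i) < del) ->
    Rabs (F w - F v) < eps.
Definition dep_on (d : nat) (F : (nat -> R) -> R) :=
  forall v w : nat -> R, (forall i, (i < d)%nat -> v i = w i) -> F v = F w.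
Definition cube (d : nat) (v : nat -> R) := forall i, (i < d)%nat -> Rabs (v i) <= 1.

Lemma cont_const d c : cont_on d (fun _ => c).
Proof. intros v e He. exists 1. split; [lra|]. intros. rewrite Rminus_diag, Rabs_R0. exact He. Qed.

Lemma cont_coord d k : (k < d)%nat -> cont_on d (fun v => v k).
Proof. intros Hk v e He. exists e. split; [exact He|]. intros w Hw. apply Hw, Hk. Qed.

Lemma cont_plus d F G : cont_on d F -> cont_on d G -> cont_on d (fun v => F v + G v).
Proof.
  intros cF cG v e He.
  destruct (cF v (e/2) ltac:(lra)) as [d1 [Hd1 H1]].
  destruct (cG v (e/2) ltac:(lra)) as [d2 [Hd2 H2]].
  exists (Rmin d1 d2). split; [apply Rmin_pos; lra|]. intros w Hw.
  assert (A1 := H1 w ltac:(intros i Hi; specialize (Hw i Hi); pose proof (Rmin_l d1 d2); lra)).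
  assert (A2 := H2 w ltac:(intros i Hi; specialize (Hw i Hi); pose proof (Rmin_r d1 d2); lra)).
  replace (F w + G w - (F v + G v)) with ((F w - F v) + (G w - G v)) by ring.
  eapply Rle_lt_trans; [apply Rabs_triang|]. lra.
Qed.

Lemma cont_mult d F G : cont_on d F -> cont_on d G -> cont_on d (fun v => F v * G v).
Proof.
  intros cF cG v e He.
  set (a := Rabs (F v)). set (b := Rabs (G v)).
  assert (Ha : 0 <= a) by apply Rabs_pos. assert (Hb : 0 <= b) by apply Rabs_pos.
  set (e1 := e / (2 * (b + 1))). set (e2 := Rmin 1 (e / (2 * (a + 1)))).
  assert (He1 : e1 * (b + 1) = e / 2) by (unfold e1; field; lra).
  assert (He2 : (a + 1) * (e / (2 * (a + 1))) = e / 2) by (field; lra).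
  assert (He2l : e2 <= 1) by apply Rmin_l.
  assert (He2r : e2 <= e / (2 * (a + 1))) by apply Rmin_r.
  destruct (cF v e1 ltac:(apply Rdiv_lt_0_compat; lra)) as [d1 [Hd1 H1]].
  destruct (cG v e2 ltac:(apply Rmin_pos; [lra| apply Rdiv_lt_0_compat; lra])) as [d2 [Hd2 H2]].
  exists (Rmin d1 d2). split; [apply Rmin_pos; lra|]. intros w Hw.
  assert (A1 := H1 w ltac:(intros i Hi; specialize (Hw i Hi); pose proof (Rmin_l d1 d2); lra)).
  assert (A2 := H2 w ltac:(intros i Hi; specialize (Hw i Hi); pose proof (Rmin_r d1 d2); lra)).
  replace (F w * G w - F v * G v) with ((F w - F v) * G w + F v * (G w - G v)) by ring.
  eapply Rle_lt_trans; [apply Rabs_triang|]. rewrite !Rabs_mult.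
  assert (HG : Rabs (G w) <= b + 1).
  { replace (G w) with (G v + (G w - G v)) by ring.
    eapply Rle_trans; [apply Rabs_triang|]. unfold b. lra. }
  assert (T1 : Rabs (F w - F v) * Rabs (G w) < e / 2).
  { eapply Rle_lt_trans; [apply Rmult_le_compat_l; [apply Rabs_pos| exact HG]|].
    rewrite <- He1. apply Rmult_lt_compat_r; lra. }
  assert (T2 : Rabs (F v) * Rabs (G w - G v) <= (a + 1) * (e / (2 * (a + 1)))).
  { apply Rmult_le_compat; try apply Rabs_pos; fold a; lra. }
  lra.
Qed.

Lemma cont_abs d F : cont_on d F -> cont_on d (fun v => Rabs (F v)).
Proof.
  intros cF v e He. destruct (cF v e He) as [del [Hd H]]. exists del; split; auto.
  intros w Hw. eapply Rle_lt_trans; [apply Rabs_triang_inv2|]. auto.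
Qed.

Lemma cont_sum d k (F : nat -> (nat -> R) -> R) : (forall i, (i < k)%nat -> cont_on d (F i)) ->
  cont_on d (fun v => rsum k (fun i => F i v)).
Proof.
  induction k; intro H; simpl.
  - apply cont_const.
  - apply cont_plus; [apply IHk; intros; apply H; lia| apply H; lia].
Qed.

(** Extreme value theorem on the compact set [{v in [-1,1]^d | G v = 0}],
    obtained from MathComp-Analysis by transporting [cont_on]/[dep_on]
    functions to functions on row vectors ['rV[R]_d]. *)
Module CompactCube.
Import all_boot all_order all_algebra.
Import all_classical all_reals all_analysis.
Import Rstruct Rstruct_topology.
Import Order.TTheory GRing.Theory Num.Theory.
Import numFieldNormedType.Exports.
Local Open Scope classical_set_scope.
Local Open Scope ring_scope.

Definition toN d (r : 'rV[R]_d) : nat -> R := fun k => oapp (fun i : 'I_d => r ord0 i) 0 (insub k).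
Arguments toN {d}.
Definition ofN d (v : nat -> R) : 'rV[R]_d := \row_(i < d) v i.

Lemma toN_ofN d v i : (i < d)%N -> toN (ofN d v) i = v i.
Proof. by move=> id; rewrite /toN insubT /= mxE. Qed.

Lemma toN_lt d (r : 'rV[R]_d) (i : 'I_d) : toN r i = r ord0 i.
Proof. by rewrite /toN valK. Qed.

Lemma RabsN (x : R) : Rabs x = `|x|. Proof. by []. Qed.

Lemma cont_toN d F : cont_on d F -> continuous (fun r : 'rV[R]_d => F (toN r)).
Proof.
move=> cF r; apply/(@cvgrPdist_lt R R^o _ (nbhs r) (nbhs_filter r)) => e e0.
have e0R : Rlt 0 e by apply/RltP.
have [del [del0 Hdel]] := cF (toN r) e e0R.
apply/nbhs_ballP; exists del; first by apply/RltP.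
move=> s /= [_ rs]; rewrite distrC; apply/RltP; apply: Hdel => i /ssrnat.ltP id.
rewrite -[i]/(nat_of_ord (Ordinal id)) !toN_lt; apply/RltP.
by have := rs ord0 (Ordinal id); rewrite /ball /= /ball_ /= distrC.
Qed.

Lemma constrained_max d F G : cont_on d F -> cont_on d G -> dep_on d F -> dep_on d G ->
  (exists v0, cube d v0 /\ G v0 = 0%coqR) ->
  exists v, cube d v /\ G v = 0%coqR /\ forall w, cube d w -> G w = 0%coqR -> Rle (F w) (F v).
Proof.
move=> cF cG dF dG [v0 [cv0 Gv0]].
pose A := [set r : 'rV[R]_d | forall i, `[(-1)%R, 1%R]%classic (r ord0 i)] `&`
  ((fun r => G (toN r)) @^-1` [set 0%R]).
have cA : compact A.
  apply: compact_closedI.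
    exact: (@rV_compact R d (fun=> `[(-1)%R, 1%R]%classic) (fun=> @segment_compact _ _ _)).
  apply: (proj1 (@continuous_closedP _ _ (fun r : 'rV[R]_d => G (toN r))) (cont_toN _ _ cG)).
  exact: closed_eq.
have inA w : cube d w -> G w = 0%coqR -> A (ofN d w).
  move=> cw Gw; split.
    move=> i /=; rewrite mxE /= in_itv /=; have := cw i ltac:(apply/ssrnat.ltP; exact: ltn_ord).
    by move=> /RleP; rewrite RabsN ler_norml => /andP[-> ->].
  rewrite /=; transitivity (G w) => //; apply: dG => i /ssrnat.ltP id; by rewrite toN_ofN.
have A0 : A !=set0 by exists (ofN d v0); apply: inA.
have cf : {within A, continuous (fun r => F (toN r))}.
  by apply: continuous_subspaceT; exact: cont_toN.
have [c cA' cmax] := compact_EVT_max A0 cA cf.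
move: cA'; rewrite inE => -[cc Gc].
exists (toN c); split; [|split] => //.
  move=> i /ssrnat.ltP id; rewrite -[i]/(nat_of_ord (Ordinal id)) toN_lt; apply/RleP.
  by rewrite RabsN ler_norml; have := cc (Ordinal id); rewrite /= in_itv /=.
move=> w cw Gw; apply/RleP.
have -> : F w = F (toN (ofN d w)) by apply: dF => i /ssrnat.ltP id; rewrite toN_ofN.
by apply: cmax; rewrite inE; apply: inA.
Qed.

End CompactCube.

(** Polarization for a symmetric bilinear map [B]: with [a = u + v] and
    [b = u - v] one has [B(a,a) - B(b,b) = 4 B(u,v)].  After expansion this is
    an identity between combinations of [P = B(u,u)], [Q = B(u,v)], [W = B(v,v)],
    which we check by computing coefficients in the span of [P, Q, W]. *)
Section Polarization.
Variable Y : NormedSpace.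
Variables P Q W : Y.

Definition span3 (p q r : R) : Y := vadd (vadd (vscal p P) (vscal q Q)) (vscal r W).

Lemma span3_add p q r p' q' r' :
  vadd (span3 p q r) (span3 p' q' r') = span3 (p + p') (q + q') (r + r').
Proof. unfold span3. rewrite vswap4, (vswap4 _ (vscal p P)), <- !vscal_distr_s. reflexivity. Qed.

Lemma span3_scal c p q r : vscal c (span3 p q r) = span3 (c * p) (c * q) (c * r).
Proof. unfold span3. rewrite !vscal_distr_v, !vscal_assoc. reflexivity. Qed.

Lemma span3_P : P = span3 1 0 0.
Proof. unfold span3. rewrite !vscal_0, !vadd_0, vscal_1. reflexivity. Qed.

Lemma span3_Q : Q = span3 0 1 0.
Proof. unfold span3. rewrite !vscal_0, vadd_0, vadd_0l, vscal_1. reflexivity. Qed.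

Lemma span3_W : W = span3 0 0 1.
Proof. unfold span3. rewrite !vscal_0, vadd_0, vadd_0l, vscal_1. reflexivity. Qed.

(** The expanded polarization identity, in the shape produced by expanding
    [B(u+v,u+v)] and [B(u-v,u-v)] by bilinearity. *)
Lemma polarization_identity :
  vadd (vadd (vscal 1 (vadd (vscal 1 P) Q)) (vadd (vscal 1 Q) W))
       (vscal (-1) (vadd (vscal (-1) (vadd (vscal (-1) W) Q)) (vadd (vscal (-1) Q) P)))
  = vscal 4 Q.
Proof.
  rewrite span3_P, span3_Q, span3_W. repeat progress rewrite ?span3_scal, ?span3_add.
  f_equal; ring.
Qed.

End Polarization.

(** Kellogg's theorem for the symmetric m-linear form obtained by restricting
    [L] to the span of [ys 0, ..., ys (n-1)] with Euclidean coordinates: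
    a "frame" [u] is an m-tuple of vectors [u j] of R^n, and
    [Aform u = L(sum_i u_0i ys_i, ..., sum_i u_(m-1)i ys_i)]. *)
Section Kellogg.
Variables (X Y : NormedSpace) (m n : nat) (L : (nat -> X) -> Y) (ys : nat -> X).
Hypothesis hL : is_csm X Y m L.
Hypothesis hm : (1 <= m)%nat.
Hypothesis hn : (1 <= n)%nat.

Let hdep : depends_on_first X Y m L := proj1 hL.
Let hml : multilinear X Y m L := proj1 (proj2 hL).
Let hsym : symmetric_map X Y m L := proj1 (proj2 (proj2 hL)).
Let hcont : continuous_map X Y m L := proj2 (proj2 (proj2 hL)).

Definition unit_frame (u : nat -> nat -> R) :=
  forall j, (j < m)%nat -> rsum n (fun i => u j i * u j i) = 1.
Definition Aform (u : nat -> nat -> R) : Y := L (fun j => comb ys n (u j)).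
Definition Anorm (u : nat -> nat -> R) : R := vnorm (Aform u).
Definition defect (u : nat -> nat -> R) :=
  rsum m (fun j => Rabs (rsum n (fun i => u j i * u j i) + -1)).
(** [Phi u = |u_0 + ... + u_(m-1)|^2], the quantity maximised among maximisers. *)
Definition Phi (u : nat -> nat -> R) :=
  rsum n (fun i => rsum m (fun j => u j i) * rsum m (fun j => u j i)).

Definition unflat (v : nat -> R) j i := v (j * n + i)%nat.
Definition flat (u : nat -> nat -> R) k := u (k / n)%nat (k mod n)%nat.
Definition frame_dep (H : (nat -> nat -> R) -> R) :=
  forall u u', (forall j i, (j < m)%nat -> (i < n)%nat -> u j i = u' j i) -> H u = H u'.
Definition frame_cont (H : (nat -> nat -> R) -> R) := cont_on (m * n) (fun v => H (unflat v)).

Lemma unflat_flat u j i : (i < n)%nat -> unflat (flat u) j i = u j i.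
Proof.
  intro Hi. unfold unflat, flat. rewrite Nat.div_add_l, Nat.div_small by lia.
  assert (E : ((j * n + i) mod n = i)%nat)
    by (rewrite Nat.add_comm, Nat.Div0.mod_add; apply Nat.mod_small; lia).
  rewrite E. f_equal. lia.
Qed.

Lemma frame_dep_flat H u : frame_dep H -> H (unflat (flat u)) = H u.
Proof. intro D. apply D. intros. apply unflat_flat; auto. Qed.

Lemma dep_on_unflat H : frame_dep H -> dep_on (m * n) (fun v => H (unflat v)).
Proof. intros D v w E. apply D. intros j i Hj Hi. unfold unflat. apply E. nia. Qed.

Lemma unit_frame_cube u : unit_frame u -> cube (m * n) (flat u).
Proof.
  intros Hu k Hk. unfold flat.
  assert (Hj : (k / n < m)%nat) by (apply Nat.Div0.div_lt_upper_bound; lia).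
  assert (Hi : (k mod n < n)%nat) by (apply Nat.mod_upper_bound; lia).
  pose proof (rsum_term_le n (fun i => u (k / n)%nat i * u (k / n)%nat i) (k mod n)
    ltac:(intros; apply Rle_0_sqr) Hi) as H. simpl in H. rewrite (Hu _ Hj) in H.
  apply Rabs_le. nra.
Qed.

Lemma defect_unit u : unit_frame u -> defect u = 0.
Proof.
  intro Hu. unfold defect. rewrite (rsum_ext _ _ (fun _ => 0)), rsum_const; [ring|].
  intros j Hj. rewrite (Hu j Hj). replace (1 + -1) with 0 by ring. apply Rabs_R0.
Qed.

Lemma defect_nonneg u : 0 <= defect u.
Proof. apply rsum_nonneg. intros; apply Rabs_pos. Qed.

Lemma unit_defect u : defect u = 0 -> unit_frame u.
Proof.
  intros H j Hj. pose proof (rsum_nonneg_zero m _ (fun j _ => Rabs_pos _) H j Hj) as E.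
  simpl in E. destruct (Req_dec (rsum n (fun i => u j i * u j i) + -1) 0) as [Z|Z]; [lra|].
  apply Rabs_no_R0 in Z. contradiction.
Qed.

Lemma Anorm_dep : frame_dep Anorm.
Proof.
  intros u u' E. unfold Anorm, Aform. f_equal. apply hdep. intros j Hj.
  apply comb_ext. intros; apply E; auto.
Qed.

Lemma defect_dep : frame_dep defect.
Proof.
  intros u u' E. unfold defect. apply rsum_ext. intros j Hj. do 2 f_equal. apply rsum_ext.
  intros i Hi. rewrite E by auto. reflexivity.
Qed.

Lemma Phi_dep : frame_dep Phi.
Proof.
  intros u u' E. unfold Phi. apply rsum_ext. intros i Hi.
  rewrite (rsum_ext m (fun j => u j i) (fun j => u' j i)) by (intros; apply E; auto).
  reflexivity.
Qed.

Lemma cont_entry j i : (j < m)%nat -> (i < n)%nat -> cont_on (m * n) (fun v => unflat v j i).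
Proof. intros. unfold unflat. apply cont_coord. nia. Qed.

Lemma defect_cont : frame_cont defect.
Proof.
  unfold frame_cont, defect. apply cont_sum. intros j Hj. apply cont_abs.
  apply cont_plus; [|apply cont_const].
  apply cont_sum. intros i Hi. apply cont_mult; apply cont_entry; auto.
Qed.

Lemma Phi_cont : frame_cont Phi.
Proof.
  unfold frame_cont, Phi. apply cont_sum. intros i Hi.
  apply cont_mult; apply cont_sum; intros; apply cont_entry; auto.
Qed.

Lemma Anorm_cont : frame_cont Anorm.
Proof.
  intros v e He.
  destruct (hcont (fun j => comb ys n (unflat v j)) e He) as [del [Hdel H]].
  set (C := rsum n (fun i => vnorm (ys i))).
  assert (HC : 0 <= C) by (apply rsum_nonneg; intros; apply vnorm_nonneg).
  assert (Hq : 0 < del / (C + 1)) by (apply Rdiv_lt_0_compat; lra).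
  exists (del / (C + 1)). split; [exact Hq|].
  intros w Hw. unfold Anorm, Aform.
  eapply Rle_lt_trans; [apply vnorm_rev|]. apply H.
  intros j Hj. rewrite comb_sub. eapply Rle_lt_trans; [apply comb_norm|].
  apply Rle_lt_trans with (rsum n (fun i => del / (C + 1) * vnorm (ys i))).
  - apply rsum_le. intros i Hi. apply Rmult_le_compat_r; [apply vnorm_nonneg|].
    replace (-1 * unflat v j i + unflat w j i) with (w (j * n + i)%nat - v (j * n + i)%nat)
      by (unfold unflat; ring).
    left. apply Hw. nia.
  - rewrite rsum_scal. fold C.
    replace (del / (C + 1) * C) with (del - del / (C + 1)) by (field; lra). lra.
Qed.

Lemma frame_argmax F C : frame_dep F -> frame_dep C -> frame_cont F -> frame_cont C ->
  (forall u, C u = 0 -> unit_frame u) -> (exists u0, unit_frame u0 /\ C u0 = 0) ->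
  exists u, C u = 0 /\ forall w, unit_frame w -> C w = 0 -> F w <= F u.
Proof.
  intros dF dC cF cC HC [u0 [U0 C0]].
  destruct (CompactCube.constrained_max (m * n) (fun v => F (unflat v)) (fun v => C (unflat v))
              cF cC (dep_on_unflat _ dF) (dep_on_unflat _ dC)) as [v [_ [Cv Hv]]].
  { exists (flat u0). split; [apply unit_frame_cube, U0|]. rewrite frame_dep_flat; auto. }
  exists (unflat v). split; [exact Cv|]. intros w Uw Cw.
  rewrite <- (frame_dep_flat F w dF). apply Hv; [apply unit_frame_cube, Uw|].
  rewrite frame_dep_flat; auto.
Qed.

Definition updT (u : nat -> nat -> R) j (s : nat -> R) := fun l => if Nat.eqb l j then s else u l.

Lemma rsum_updT k (u : nat -> nat -> R) j0 s i : (j0 < k)%nat ->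
  rsum k (fun j => updT u j0 s j i) = rsum k (fun j => u j i) - u j0 i + s i.
Proof.
  induction k; intro H; [lia|]. simpl. unfold updT at 2. destruct (Nat.eqb_spec k j0).
  - subst. rewrite (rsum_ext _ _ (fun j => u j i)); [ring|].
    intros l Hl. unfold updT. destruct (Nat.eqb_spec l j0); [lia|reflexivity].
  - rewrite IHk by lia. ring.
Qed.

Lemma Anorm_flip u j : (j < m)%nat -> Anorm (updT u j (fun i => -1 * u j i)) = Anorm u.
Proof.
  intro Hj. set (f := fun l => comb ys n (u l)).
  assert (E : (fun l => comb ys n (updT u j (fun i => -1 * u j i) l)) = upd f j (vscal (-1) (f j))).
  { apply functional_extensionality; intro l. unfold updT, upd, f.
    destruct (Nat.eqb_spec l j); [subst; apply comb_scal|reflexivity]. }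
  unfold Anorm, Aform. rewrite E, (ml_scal X Y m L hml) by exact Hj.
  rewrite vnorm_scal, Rabs_minus_one, Rmult_1_l, upd_same. reflexivity.
Qed.

(** The restriction to two rows [j1 <> j2] of a frame [u]:
    [B s s'] is [Aform] with rows [j1], [j2] replaced by [s], [s'].
    By multilinearity and symmetry of [L] it is a symmetric bilinear map. *)
Section PairForm.
Variables (u : nat -> nat -> R) (j1 j2 : nat).
Hypothesis hj1 : (j1 < m)%nat.
Hypothesis hj2 : (j2 < m)%nat.
Hypothesis hj12 : j1 <> j2.

Definition pair_frame (s s' : nat -> R) : nat -> nat -> R := updT (updT u j1 s) j2 s'.
Definition B (s s' : nat -> R) : Y := Aform (pair_frame s s').

Lemma pair_frame_unit s s' : unit_frame u -> rsum n (fun i => s i * s i) = 1 ->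
  rsum n (fun i => s' i * s' i) = 1 -> unit_frame (pair_frame s s').
Proof.
  intros Hu Hs Hs' j Hj. unfold pair_frame, updT.
  destruct (Nat.eqb_spec j j2); auto. destruct (Nat.eqb_spec j j1); auto.
Qed.

Lemma pair_frame_row1 s s' s0 : (fun l => comb ys n (pair_frame s s' l))
  = upd (fun l => comb ys n (pair_frame s0 s' l)) j1 (comb ys n s).
Proof.
  apply functional_extensionality; intro l. unfold pair_frame, upd, updT.
  destruct (Nat.eqb_spec l j1), (Nat.eqb_spec l j2); subst; try reflexivity; lia.
Qed.

Lemma B_orig : B (u j1) (u j2) = Aform u.
Proof.
  unfold B, pair_frame. f_equal. apply functional_extensionality; intro l. f_equal.
  unfold updT. destruct (Nat.eqb_spec l j2), (Nat.eqb_spec l j1); subst; reflexivity.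
Qed.

Lemma B_lin1 a s t s' : B (fun i => a * s i + t i) s' = vadd (vscal a (B s s')) (B t s').
Proof.
  unfold B, Aform. rewrite (pair_frame_row1 _ s' s), comb_lin, hml by exact hj1.
  rewrite <- (pair_frame_row1 s s' s), <- (pair_frame_row1 t s' s). reflexivity.
Qed.

Lemma B_sym s s' : B s s' = B s' s.
Proof.
  unfold B, Aform.
  set (sg := fun l => if Nat.eqb l j1 then j2 else if Nat.eqb l j2 then j1 else l).
  assert (E : (fun l => comb ys n (pair_frame s' s (sg l))) = (fun l => comb ys n (pair_frame s s' l))).
  { apply functional_extensionality; intro l. unfold pair_frame, updT, sg.
    destruct (Nat.eqb_spec l j1), (Nat.eqb_spec l j2); subst; try lia.
    - rewrite Nat.eqb_refl. destruct (Nat.eqb_spec j2 j1); [lia|]. reflexivity.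
    - rewrite Nat.eqb_refl. destruct (Nat.eqb_spec j1 j2); [lia|]. reflexivity.
    - destruct (Nat.eqb_spec l j1), (Nat.eqb_spec l j2); try lia. reflexivity. }
  rewrite <- E. refine (hsym sg _ _ (fun l => comb ys n (pair_frame s' s l))).
  - intros i Hi. unfold sg. destruct (Nat.eqb_spec i j1), (Nat.eqb_spec i j2); lia.
  - intros i k Hi Hk. unfold sg.
    destruct (Nat.eqb_spec i j1), (Nat.eqb_spec i j2), (Nat.eqb_spec k j1), (Nat.eqb_spec k j2); lia.
Qed.

Lemma B_zero1 s s' : (forall i, (i < n)%nat -> s i = 0) -> B s s' = vzero.
Proof.
  intro H. unfold B, Aform. rewrite (pair_frame_row1 _ s' s), comb_zero by exact H.
  apply (ml_zero X Y m L hml); auto.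
Qed.

Lemma B_diag_scal c s : vnorm (B (fun i => c * s i) (fun i => c * s i)) = c * c * vnorm (B s s).
Proof.
  assert (S1 : forall t t', B (fun i => c * t i) t' = vscal c (B t t')).
  { intros t t'. rewrite <- (vadd_0 (vscal c (B t t'))), <- (B_zero1 (fun _ => 0) t') by auto.
    rewrite <- B_lin1. f_equal. apply functional_extensionality; intro; ring. }
  rewrite S1, B_sym, S1, !vnorm_scal, <- Rmult_assoc, <- Rabs_mult.
  rewrite Rabs_right by (apply Rle_ge, Rle_0_sqr). reflexivity.
Qed.

Lemma polar_ineq : 4 * vnorm (B (u j1) (u j2)) <=
  vnorm (B (fun i => 1 * u j1 i + u j2 i) (fun i => 1 * u j1 i + u j2 i)) +
  vnorm (B (fun i => -1 * u j2 i + u j1 i) (fun i => -1 * u j2 i + u j1 i)).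
Proof.
  set (u1 := u j1). set (u2 := u j2).
  set (a := fun i => 1 * u1 i + u2 i). set (b := fun i => -1 * u2 i + u1 i).
  assert (Ea : B a a = vadd (vscal 1 (vadd (vscal 1 (B u1 u1)) (B u1 u2)))
                            (vadd (vscal 1 (B u1 u2)) (B u2 u2))).
  { unfold a at 1. rewrite B_lin1, (B_sym u1 a), (B_sym u2 a). unfold a.
    rewrite !B_lin1, (B_sym u2 u1). reflexivity. }
  assert (Eb : B b b = vadd (vscal (-1) (vadd (vscal (-1) (B u2 u2)) (B u1 u2)))
                            (vadd (vscal (-1) (B u1 u2)) (B u1 u1))).
  { unfold b at 1. rewrite B_lin1, (B_sym u2 b), (B_sym u1 b). unfold b.
    rewrite !B_lin1, (B_sym u2 u1). reflexivity. }
  pose proof (polarization_identity Y (B u1 u1) (B u1 u2) (B u2 u2)) as P4.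
  rewrite <- Ea, <- Eb in P4.
  pose proof (vnorm_triangle (B a a) (vscal (-1) (B b b))) as T.
  rewrite P4, !vnorm_scal, Rabs_minus_one, Rabs_right in T by lra. lra.
Qed.

End PairForm.

Lemma Phi_pair u j1 j2 s s' : (j1 < m)%nat -> (j2 < m)%nat -> j1 <> j2 ->
  Phi (pair_frame u j1 j2 s s') =
  rsum n (fun i => (rsum m (fun j => u j i) - u j1 i + s i - u j2 i + s' i)
                 * (rsum m (fun j => u j i) - u j1 i + s i - u j2 i + s' i)).
Proof.
  intros Hj1 Hj2 Hj12. unfold Phi, pair_frame. apply rsum_ext. intros i Hi.
  assert (E : updT u j1 s j2 = u j2)
    by (unfold updT; destruct (Nat.eqb_spec j2 j1); [lia|reflexivity]).
  rewrite !rsum_updT, E by auto. reflexivity.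
Qed.

Section Maximizer.
Variables (u : nat -> nat -> R) (N : R).
Hypothesis Hu : unit_frame u.
Hypothesis HFu : Anorm u = N.
Hypothesis HN : forall w, unit_frame w -> Anorm w <= N.
Hypothesis HP : forall w, unit_frame w -> Anorm w = N -> Phi w <= Phi u.

Let S i := rsum m (fun j => u j i).

Lemma Phi_S : Phi u = rsum n (fun i => S i * S i).
Proof. reflexivity. Qed.

(** Flipping the sign of row [j] gives another maximiser, so
    [Phi u >= |S - 2 u_j|^2 = Phi u - 4 <S,u_j> + 4], i.e. [<S,u_j> >= 1]. *)
Lemma row_inner_ge1 j : (j < m)%nat -> 1 <= rsum n (fun i => S i * u j i).
Proof.
  intro Hj. set (w := updT u j (fun i => -1 * u j i)).
  assert (Uw : unit_frame w).
  { intros l Hl. unfold w, updT. destruct (Nat.eqb_spec l j); [subst|apply Hu; exact Hl].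
    rewrite <- (Hu j Hj). apply rsum_ext. intros; ring. }
  assert (Fw : Anorm w = N) by (unfold w; rewrite Anorm_flip; auto).
  pose proof (HP w Uw Fw) as H. rewrite Phi_S in H. unfold Phi in H.
  rewrite (rsum_ext n _ (fun i => (S i + -2 * u j i) * (S i + -2 * u j i))) in H
    by (intros i Hi; unfold w; rewrite rsum_updT by exact Hj; unfold S; ring).
  rewrite rsum_quad, (Hu j Hj) in H. lra.
Qed.

Section Pair.
Variables (j1 j2 : nat).
Hypothesis hj1 : (j1 < m)%nat.
Hypothesis hj2 : (j2 < m)%nat.
Hypothesis hj12 : j1 <> j2.

(** Replacing rows [j1], [j2] by the same unit vector [s / |s|] gives a unit
    frame, hence [|B(s,s)| <= N |s|^2]. *)
Lemma pair_form_bound s : vnorm (B u j1 j2 s s) <= N * rsum n (fun i => s i * s i).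
Proof.
  set (q := rsum n (fun i => s i * s i)).
  assert (HN0 : 0 <= N) by (rewrite <- HFu; apply vnorm_nonneg).
  destruct (rsum_sq_nonneg n s) as [Hq|Hq]; fold q in Hq.
  - set (c := / sqrt q). assert (Hc : 0 < sqrt q) by (apply sqrt_lt_R0; lra).
    pose proof (rsum_sq_normalize n s Hq) as Hsh. fold q c in Hsh.
    pose proof (HN _ (pair_frame_unit u j1 j2 _ _ Hu Hsh Hsh)) as H.
    unfold Anorm in H. fold (B u j1 j2 (fun i => c * s i) (fun i => c * s i)) in H.
    rewrite B_diag_scal in H by auto.
    assert (Ecc : c * c * q = 1) by (unfold c; rewrite <- (sqrt_sqrt q) at 3 by lra; field; lra).
    apply (Rmult_le_compat_l q) in H; [|lra].
    replace (q * (c * c * vnorm (B u j1 j2 s s))) with (c * c * q * vnorm (B u j1 j2 s s)) in H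
      by ring.
    rewrite Ecc, Rmult_1_l in H. lra.
  - rewrite (B_zero1 u j1 j2 hj1 hj2 hj12) by (apply rsum_sq_zero; fold q; lra).
    rewrite vnorm_zero, <- Hq. lra.
Qed.

Lemma pair_parallelogram :
  rsum n (fun i => (1 * u j1 i + u j2 i) * (1 * u j1 i + u j2 i))
  + rsum n (fun i => (-1 * u j2 i + u j1 i) * (-1 * u j2 i + u j1 i)) = 4.
Proof.
  rewrite <- rsum_plus.
  rewrite (rsum_ext _ _ (fun i => 2 * (u j1 i * u j1 i) + 2 * (u j2 i * u j2 i))) by (intros; ring).
  rewrite rsum_plus, !rsum_scal, (Hu j1), (Hu j2) by auto. ring.
Qed.

Lemma sum_form_tight :
  vnorm (B u j1 j2 (fun i => 1 * u j1 i + u j2 i) (fun i => 1 * u j1 i + u j2 i))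
  = N * rsum n (fun i => (1 * u j1 i + u j2 i) * (1 * u j1 i + u j2 i)).
Proof.
  set (a := fun i => 1 * u j1 i + u j2 i). set (b := fun i => -1 * u j2 i + u j1 i).
  change (vnorm (B u j1 j2 a a) = N * rsum n (fun i => a i * a i)).
  pose proof pair_parallelogram as Hab.
  change (rsum n (fun i => a i * a i) + rsum n (fun i => b i * b i) = 4) in Hab.
  pose proof (polar_ineq u j1 j2 hj1 hj2 hj12) as P. fold a b in P.
  rewrite (B_orig u j1 j2 hj2 hj12) in P. fold (Anorm u) in P. rewrite HFu in P.
  pose proof (pair_form_bound a). pose proof (pair_form_bound b).
  assert (N * rsum n (fun i => a i * a i) + N * rsum n (fun i => b i * b i) = 4 * N)
    by (rewrite <- Rmult_plus_distr_l, Hab; ring).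
  lra.
Qed.

(** The two rows coincide: otherwise replacing both by [a / |a|] (with
    [|a| < 2]) keeps [Anorm = N] and strictly increases [Phi], since
    [<S,a> >= 2]. *)
Lemma rows_equal : forall i, (i < n)%nat -> u j1 i = u j2 i.
Proof.
  set (a := fun i => 1 * u j1 i + u j2 i).
  set (q := rsum n (fun i => a i * a i)).
  assert (Sa : 2 <= rsum n (fun i => S i * a i)).
  { pose proof (row_inner_ge1 j1 hj1). pose proof (row_inner_ge1 j2 hj2).
    rewrite (rsum_ext _ _ (fun i => 1 * (S i * u j1 i) + S i * u j2 i)) by (intros; unfold a; ring).
    rewrite rsum_lin. lra. }
  assert (Hq0 : 0 < q).
  { destruct (rsum_sq_nonneg n a) as [Z|Z]; [exact Z|]. fold q in Z.
    rewrite (rsum_ext _ _ (fun _ => 0)), rsum_const in Sa; [lra|].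
    intros i Hi. rewrite (rsum_sq_zero n a ltac:(fold q; lra) i Hi). ring. }
  intros i0 Hi0. apply Rminus_diag_uniq.
  apply (rsum_sq_zero n (fun i => u j1 i - u j2 i)); [|exact Hi0]. apply Rnot_gt_le. intro Hb.
  assert (Hq4 : q < 4).
  { pose proof pair_parallelogram as E.
    change (q + rsum n (fun i => (-1 * u j2 i + u j1 i) * (-1 * u j2 i + u j1 i)) = 4) in E.
    rewrite (rsum_ext n _ (fun i => (u j1 i - u j2 i) * (u j1 i - u j2 i))) in E
      by (intros; ring).
    lra. }
  set (c := sqrt q). assert (Hc : 0 < c) by (apply sqrt_lt_R0; lra).
  assert (Hcc : c * c = q) by (apply sqrt_sqrt; lra).
  pose proof (rsum_sq_normalize n a Hq0) as Hw. fold q c in Hw.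
  assert (Fw : Anorm (pair_frame u j1 j2 (fun i => / c * a i) (fun i => / c * a i)) = N).
  { unfold Anorm. fold (B u j1 j2 (fun i => / c * a i) (fun i => / c * a i)).
    pose proof sum_form_tight as Ht. fold a in Ht.
    change (rsum n (fun i => (1 * u j1 i + u j2 i) * (1 * u j1 i + u j2 i))) with q in Ht.
    rewrite B_diag_scal, Ht, <- Hcc by auto. field. lra. }
  pose proof (HP _ (pair_frame_unit u j1 j2 _ _ Hu Hw Hw) Fw) as H. rewrite Phi_S in H.
  set (kp := 2 / c - 1).
  rewrite Phi_pair, (rsum_ext n _ (fun i => (S i + kp * a i) * (S i + kp * a i))) in H
    by (auto; intros i Hi; unfold kp, a; fold (S i); field; lra).
  rewrite rsum_quad in H. fold q in H.
  assert (Hkp : 0 < kp) by (unfold kp; apply Rlt_0_minus; apply (Rmult_lt_reg_r c); [lra|];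
    unfold Rdiv; rewrite Rmult_assoc, Rinv_l by lra; nra).
  assert (0 < 2 * kp * rsum n (fun i => S i * a i)) by nra.
  assert (0 <= kp * kp * q) by nra.
  lra.
Qed.

End Pair.
End Maximizer.

Lemma unit_frame_exists : exists u, unit_frame u.
Proof.
  exists (fun _ i => if Nat.eqb i 0 then 1 else 0). intros j Hj.
  rewrite (rsum_ext _ _ (fun i => if Nat.eqb i 0 then 1 else 0)).
  - apply rsum_single. lia.
  - intros i Hi. destruct (Nat.eqb i 0); ring.
Qed.

Lemma exists_extremal_frame : exists u N, unit_frame u /\ Anorm u = N /\
  (forall w, unit_frame w -> Anorm w <= N) /\
  (forall w, unit_frame w -> Anorm w = N -> Phi w <= Phi u).
Proof.
  destruct (frame_argmax Anorm defect Anorm_dep defect_dep Anorm_cont defect_cont unit_defect)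
    as [v [Dv Hv]].
  { destruct unit_frame_exists as [u0 U0]. exists u0. split; [|apply defect_unit]; exact U0. }
  set (N := Anorm v).
  set (C := fun u => defect u + Rabs (Anorm u + - N)).
  assert (HC : forall u, C u = 0 -> unit_frame u /\ Anorm u = N).
  { intros u Cu. unfold C in Cu. pose proof (defect_nonneg u). pose proof (Rabs_pos (Anorm u + - N)).
    split; [apply unit_defect; lra|].
    destruct (Req_dec (Anorm u + - N) 0) as [Z|Z]; [lra|]. apply Rabs_no_R0 in Z. lra. }
  assert (CN : forall w, unit_frame w -> Anorm w = N -> C w = 0).
  { intros w Uw Fw. unfold C. rewrite defect_unit, Fw by exact Uw.
    replace (N + - N) with 0 by ring. rewrite Rabs_R0. ring. }
  destruct (frame_argmax Phi C Phi_dep) as [u [Cu Hu]].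
  - intros u u' E. unfold C. rewrite (defect_dep u u' E), (Anorm_dep u u' E). reflexivity.
  - exact Phi_cont.
  - apply cont_plus; [apply defect_cont|].
    apply cont_abs, cont_plus; [apply Anorm_cont| apply cont_const].
  - intros u Cu. apply HC, Cu.
  - exists v. split; [apply unit_defect, Dv| apply CN; [apply unit_defect, Dv|reflexivity]].
  - destruct (HC u Cu) as [Uu Fu]. exists u, N. repeat split; auto.
    intros w Uw. apply Hv; [exact Uw| apply defect_unit, Uw].
Qed.

(** Kellogg's theorem: if [|hat L (sum_i t_i ys_i)| <= M] for every unit
    vector [t] of R^n, then [|Aform u| <= M] for every unit frame [u]:
    the extremal frame has all its rows equal. *)
Theorem kellogg M :
  (forall t, rsum n (fun i => t i * t i) = 1 -> vnorm (hat L (comb ys n t)) <= M) ->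
  forall u, unit_frame u -> Anorm u <= M.
Proof.
  intros HM w Uw.
  destruct exists_extremal_frame as [u [N [Uu [Fu [HN HP]]]]].
  assert (Eq : forall j i, (j < m)%nat -> (i < n)%nat -> u j i = u 0%nat i).
  { intros j i Hj Hi. destruct (Nat.eq_dec j 0) as [->|Hj0]; [reflexivity|].
    apply (rows_equal u N Uu Fu HN HP j 0%nat); auto; lia. }
  assert (Hhat : Anorm u = vnorm (hat L (comb ys n (u 0%nat)))).
  { unfold Anorm, Aform, hat. f_equal. apply hdep. intros j Hj.
    apply comb_ext. intros i Hi. apply Eq; auto. }
  pose proof (HN w Uw). pose proof (HM (u 0%nat) (Uu 0%nat ltac:(lia))). lra.
Qed.

End Kellogg.

(** [blk ks j] is the index of the block of [block_tuple xs ks] containing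
    position [j]: position [j] carries [xs] at index [blk ks j]. *)
Fixpoint blk (ks : list nat) (j : nat) : nat :=
  match ks with
  | nil => 0%nat
  | k :: ks' => if Nat.ltb j k then 0%nat else S (blk ks' (j - k))
  end.

Lemma blk_spec (X : NormedSpace) (ks : list nat) (xs : list X) j :
  length xs = length ks -> (j < list_sum ks)%nat ->
  (blk ks j < length ks)%nat /\ block_tuple xs ks j = nth (blk ks j) xs vzero.
Proof.
  revert xs j. induction ks as [|k ks IH]; intros xs j Hl Hj; simpl in *; [lia|].
  destruct xs as [|x xs]; simpl in Hl; [lia|].
  unfold block_tuple. simpl.
  destruct (Nat.ltb_spec j k).
  - split; [lia|]. rewrite app_nth1 by (rewrite repeat_length; lia). apply nth_repeat_lt. lia.
  - rewrite app_nth2 by (rewrite repeat_length; lia). rewrite repeat_length.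
    destruct (IH xs (j - k)%nat ltac:(lia) ltac:(lia)) as [H1 H2]. split; [lia|]. exact H2.
Qed.

Section BlockBound.
Variables (X Y : NormedSpace) (m n : nat) (L : (nat -> X) -> Y) (K : R).
Hypothesis hL : is_csm X Y m L.
Hypothesis hm : (1 <= m)%nat.
Hypothesis hn : (1 <= n)%nat.
Hypothesis HK : is_lub (hat_norm_set L) K.

Lemma hat_comb_bound xs (alpha : nat -> R) :
  length xs = n -> Forall (fun x => vnorm x <= 1) xs -> (forall i, 0 <= alpha i) ->
  forall t, rsum n (fun i => t i * t i) = 1 ->
  vnorm (hat L (comb (fun i => vscal (alpha i) (nth i xs vzero)) n t))
  <= K * sqrt (rsum n (fun i => alpha i * alpha i)) ^ m.
Proof.
  intros Hxs Hf Ha t Ht.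
  pose proof (hat_norm_nonneg X Y m L (proj1 hL) (proj1 (proj2 hL)) K hm HK) as HK0.
  eapply Rle_trans; [apply (hat_bound X Y m L (proj1 hL) (proj1 (proj2 hL)) K hm HK)|].
  apply Rmult_le_compat_l; [exact HK0|]. apply pow_incr. split; [apply vnorm_nonneg|].
  eapply Rle_trans; [apply comb_norm|].
  set (s := rsum n (fun i => alpha i * Rabs (t i))).
  apply Rle_trans with s.
  - apply rsum_le. intros i Hi. rewrite vnorm_scal, (Rabs_right (alpha i)) by (apply Rle_ge, Ha).
    assert (Hx : vnorm (nth i xs vzero) <= 1) by (apply (proj1 (Forall_nth _ xs) Hf); lia).
    pose proof (Rabs_pos (t i)). pose proof (Ha i). pose proof (vnorm_nonneg _ (nth i xs vzero)).
    assert (0 <= Rabs (t i) * alpha i) by nra. nra.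
  - assert (Hs0 : 0 <= s)
      by (apply rsum_nonneg; intros; pose proof (Ha i); pose proof (Rabs_pos (t i)); nra).
    assert (Hcs : s * s <= rsum n (fun i => alpha i * alpha i)).
    { apply cauchy_schwarz_unit. rewrite <- Ht. apply rsum_ext. intros i _.
      rewrite <- Rabs_mult. apply Rabs_right, Rle_ge, Rle_0_sqr. }
    rewrite <- (sqrt_square s) by exact Hs0. apply sqrt_le_1_alt. exact Hcs.
Qed.

(** It is Kellogg's theorem for the frame of standard basis vectors
    [u_j = e_(blk j)] and [ys_i = alpha_i x_i]. *)
Lemma block_bound ks xs (alpha : nat -> R) :
  length ks = n -> length xs = n -> list_sum ks = m ->
  Forall (fun x => vnorm x <= 1) xs -> (forall i, 0 <= alpha i) ->
  rprod m (fun j => alpha (blk ks j)) * vnorm (L (block_tuple xs ks)) <=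
  K * sqrt (rsum n (fun i => alpha i * alpha i)) ^ m.
Proof.
  intros Hks Hxs Hsum Hf Ha.
  set (ys := fun i => vscal (alpha i) (nth i xs vzero)).
  set (u := fun j i => if Nat.eqb i (blk ks j) then 1 else 0).
  assert (Hu : unit_frame m n u).
  { intros j Hj. destruct (blk_spec X ks xs j ltac:(lia) ltac:(lia)) as [Hb _].
    unfold u. rewrite (rsum_ext _ _ (fun i => if Nat.eqb i (blk ks j) then 1 else 0)).
    - apply rsum_single. lia.
    - intros i _. destruct (Nat.eqb i (blk ks j)); ring. }
  pose proof (kellogg X Y m n L ys hL hm hn _ (hat_comb_bound xs alpha Hxs Hf Ha) u Hu) as Kel.
  unfold Anorm, Aform in Kel.
  rewrite (proj1 hL _ (fun j => if Nat.ltb j m then vscal (alpha (blk ks j)) (nth (blk ks j) xs vzero)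
                                 else nth (blk ks j) xs vzero)) in Kel.
  - rewrite (ml_scal_prefix X Y m L (proj1 (proj2 hL))) in Kel by lia.
    rewrite vnorm_scal, Rabs_right in Kel by (apply Rle_ge, rprod_nonneg; intros; apply Ha).
    erewrite (proj1 hL (block_tuple xs ks)); [exact Kel|].
    intros j Hj. destruct (blk_spec X ks xs j ltac:(lia) ltac:(lia)) as [_ Hb]. exact Hb.
  - intros j Hj. destruct (blk_spec X ks xs j ltac:(lia) ltac:(lia)) as [Hb _].
    rewrite (proj2 (Nat.ltb_lt j m) Hj). unfold u. rewrite comb_basis by lia. reflexivity.
Qed.

End BlockBound.

Lemma pow_lt_strict x y k : 0 <= x -> x < y -> (1 <= k)%nat -> x ^ k < y ^ k.
Proof.
  intros Hx Hxy Hk. induction k; [lia|]. destruct k; [simpl; lra|].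
  specialize (IHk ltac:(lia)). simpl in *.
  assert (0 <= x * x ^ k) by (apply Rmult_le_pos; [lra| apply pow_le; lra]). nra.
Qed.

Lemma exp_mult_nat k t : exp (INR k * t) = exp t ^ k.
Proof.
  induction k.
  - simpl INR. rewrite Rmult_0_l, exp_0. reflexivity.
  - rewrite S_INR. cbn [pow]. rewrite <- IHk, <- exp_plus. f_equal. ring.
Qed.

(** Strict weighted AM-GM for two unequal positive integers:
    [(k0 + k1)^(k0+k1) < (2 k0)^k0 (2 k1)^k1], via [y <= exp (y - 1)]
    (strict for [y <> 1]) applied to [y_i = (k0 + k1) / (2 k_i)]. *)
Lemma two_block_amgm k0 k1 : (1 <= k0)%nat -> (1 <= k1)%nat -> k0 <> k1 ->
  INR (k0 + k1) ^ (k0 + k1) < (2 * INR k0) ^ k0 * (2 * INR k1) ^ k1.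
Proof.
  intros H0 H1 H01.
  set (m := INR (k0 + k1)). assert (Hm : m = INR k0 + INR k1) by (unfold m; apply plus_INR).
  assert (P0 : 1 <= INR k0) by (apply (le_INR 1); lia).
  assert (P1 : 1 <= INR k1) by (apply (le_INR 1); lia).
  assert (N0 : 2 * INR k0 <> m) by (rewrite Hm; intro E; apply H01, INR_eq; lra).
  set (y0 := m / (2 * INR k0)). set (y1 := m / (2 * INR k1)).
  assert (Y0p : 0 < y0) by (unfold y0; apply Rdiv_lt_0_compat; lra).
  assert (Y1p : 0 < y1) by (unfold y1; apply Rdiv_lt_0_compat; lra).
  assert (Y0 : y0 < exp (y0 - 1)).
  { assert (y0 - 1 <> 0).
    { intro Z. apply N0. assert (E : m = y0 * (2 * INR k0)) by (unfold y0; field; lra).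
      rewrite E. replace y0 with 1 by lra. ring. }
    pose proof (exp_ineq1 (y0 - 1) H). lra. }
  assert (Y1 : y1 <= exp (y1 - 1)) by (pose proof (exp_ineq1_le (y1 - 1)); lra).
  assert (A : y0 ^ k0 * y1 ^ k1 < 1).
  { apply Rlt_le_trans with (exp (y0 - 1) ^ k0 * exp (y1 - 1) ^ k1).
    - apply Rlt_le_trans with (exp (y0 - 1) ^ k0 * y1 ^ k1).
      + apply Rmult_lt_compat_r; [apply pow_lt; lra| apply pow_lt_strict; [lra|lra|lia]].
      + apply Rmult_le_compat_l; [apply pow_le; left; apply exp_pos| apply pow_incr; lra].
    - rewrite <- !exp_mult_nat, <- exp_plus. unfold y0, y1.
      replace (INR k0 * (m / (2 * INR k0) - 1) + INR k1 * (m / (2 * INR k1) - 1)) with 0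
        by (rewrite Hm; field; lra).
      rewrite exp_0. lra. }
  assert (Em : m ^ (k0 + k1) = (y0 ^ k0 * y1 ^ k1) * ((2 * INR k0) ^ k0 * (2 * INR k1) ^ k1)).
  { rewrite pow_add. replace m with (y0 * (2 * INR k0)) at 1 by (unfold y0; field; lra).
    replace m with (y1 * (2 * INR k1)) by (unfold y1; field; lra).
    rewrite !Rpow_mult_distr. ring. }
  rewrite Em. assert (0 < (2 * INR k0) ^ k0 * (2 * INR k1) ^ k1)
    by (apply Rmult_lt_0_compat; apply pow_lt; lra).
  nra.
Qed.

Lemma two_block_ineq m k0 k1 : (k0 + k1 = m)%nat -> Nat.odd m = true -> (1 <= m)%nat ->
  (m ^ m + 1 <= 2 ^ m * k0 ^ k0 * k1 ^ k1)%nat.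
Proof.
  intros Hs Ho Hm.
  assert (Hpos : (1 <= m ^ m)%nat)
    by (apply (Nat.pow_le_mono_l 1 m m) in Hm; rewrite Nat.pow_1_l in Hm; lia).
  destruct (Nat.eq_dec k0 0) as [Z0|Z0]; [|destruct (Nat.eq_dec k1 0) as [Z1|Z1]].
  - subst. simpl in *. assert (2 <= 2 ^ k1)%nat by (apply (Nat.pow_le_mono_r 2 1 k1); lia). nia.
  - subst. rewrite Nat.add_0_r in *. rewrite Nat.pow_0_r, Nat.mul_1_r.
    assert (2 <= 2 ^ k0)%nat by (apply (Nat.pow_le_mono_r 2 1 k0); lia). nia.
  - assert (k0 <> k1) by (intro E; subst; apply Nat.odd_spec in Ho; destruct Ho; lia).
    pose proof (two_block_amgm k0 k1 ltac:(lia) ltac:(lia) H) as R.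
    rewrite !Rpow_mult_distr in R.
    replace (2 ^ k0 * INR k0 ^ k0 * (2 ^ k1 * INR k1 ^ k1)) with (INR (2 ^ m * k0 ^ k0 * k1 ^ k1)) in R
      by (rewrite !mult_INR, !pow_INR; subst m; rewrite pow_add; simpl (INR 2);
          replace (1 + 1) with 2 by ring; ring).
    rewrite <- pow_INR, Hs in R. apply INR_lt in R. lia.
Qed.

Lemma root_ratio_le x K c m : (1 <= m)%nat -> 0 < K -> 1 <= c -> x <= K * c ^ m ->
  Rpower (x / K) (/ INR m) <= c.
Proof.
  intros Hm HK Hc Hx. assert (HmR : 0 < INR m) by (apply lt_0_INR; lia).
  assert (Hr : x / K <= c ^ m)
    by (apply (Rmult_le_reg_l K); [exact HK|]; unfold Rdiv; rewrite <- Rmult_assoc,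
          (Rmult_comm K x), Rmult_assoc, Rinv_r, Rmult_1_r by lra; exact Hx).
  destruct (Rle_or_lt (x / K) 0) as [Z|Z].
  - unfold Rpower, ln. destruct (Rlt_dec 0 (x / K)) as [Hp|Hp]; [exfalso; lra|]. rewrite Rmult_0_r, exp_0. exact Hc.
  - apply Rle_trans with (Rpower (c ^ m) (/ INR m)).
    + apply Rle_Rpower_l; [left; apply Rinv_0_lt_compat; lra| lra].
    + rewrite <- Rpower_pow, Rpower_mult, Rinv_r, Rpower_1 by lra. lra.
Qed.

Lemma root_ratio_lt x K c m : (1 <= m)%nat -> 0 < K -> 1 < c -> x < K * c ^ m ->
  Rpower (x / K) (/ INR m) < c.
Proof.
  intros Hm HK Hc Hx. assert (HmR : 0 < INR m) by (apply lt_0_INR; lia).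
  assert (Hr : x / K < c ^ m)
    by (apply (Rmult_lt_reg_l K); [exact HK|]; unfold Rdiv; rewrite <- Rmult_assoc,
          (Rmult_comm K x), Rmult_assoc, Rinv_r, Rmult_1_r by lra; exact Hx).
  destruct (Rle_or_lt (x / K) 0) as [Z|Z].
  - unfold Rpower, ln. destruct (Rlt_dec 0 (x / K)) as [Hp|Hp]; [exfalso; lra|]. rewrite Rmult_0_r, exp_0. exact Hc.
  - apply Rlt_le_trans with (Rpower (c ^ m) (/ INR m)).
    + apply Rlt_Rpower_l; [apply Rinv_0_lt_compat; lra| lra].
    + rewrite <- Rpower_pow, Rpower_mult, Rinv_r, Rpower_1 by lra. lra.
Qed.

Lemma sqrt_pow_sq a k : 0 <= a -> sqrt a ^ k * sqrt a ^ k = a ^ k.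
Proof. intro Ha. rewrite <- Rpow_mult_distr, sqrt_sqrt by exact Ha. reflexivity. Qed.

Definition two_const (m : nat) : R := sqrt (2 ^ m * INR m ^ m / (INR m ^ m + 1)).

Lemma two_const_sq m : two_const m * two_const m = 2 ^ m * INR m ^ m / (INR m ^ m + 1).
Proof.
  pose proof (pow_le (INR m) m (pos_INR m)). pose proof (pow_le 2 m ltac:(lra)).
  apply sqrt_sqrt. apply Rmult_le_pos; [apply Rmult_le_pos; lra|].
  left; apply Rinv_0_lt_compat; lra.
Qed.

Lemma two_const_lt m : two_const m < sqrt 2 ^ m.
Proof.
  pose proof (pow_le (INR m) m (pos_INR m)) as Hmm. pose proof (pow_lt 2 m ltac:(lra)) as Hp2.
  assert (Hs : 0 <= sqrt 2 ^ m) by (apply pow_le, sqrt_pos).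
  assert (Hc : 0 <= two_const m) by apply sqrt_pos.
  assert (two_const m * two_const m < sqrt 2 ^ m * sqrt 2 ^ m).
  { rewrite two_const_sq, sqrt_pow_sq by lra. apply (Rmult_lt_reg_r (INR m ^ m + 1)); [lra|].
    replace (2 ^ m * INR m ^ m / (INR m ^ m + 1) * (INR m ^ m + 1)) with (2 ^ m * INR m ^ m)
      by (field; lra). nra. }
  nra.
Qed.

Section NormBounds.
Variables (X Y : NormedSpace) (m n : nat) (L : (nat -> X) -> Y) (K : R).
Hypothesis hL : is_csm X Y m L.
Hypothesis hm : (1 <= m)%nat.
Hypothesis HK : is_lub (hat_norm_set L) K.

(** Unit weights in [block_bound]: [|L(x_1^k_1 ... x_n^k_n)| <= K n^(m/2)]. *)
Lemma n_norm_le normn : (1 <= n)%nat -> is_lub (n_norm_set m n L) normn ->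
  normn <= K * sqrt (INR n) ^ m.
Proof.
  intros hn Hn. apply (proj2 Hn). intros r [ks [xs [Hks [Hxs [Hsum [Hf ->]]]]]].
  pose proof (block_bound X Y m n L K hL hm hn HK ks xs (fun _ => 1) Hks Hxs Hsum Hf
                ltac:(intros; lra)) as Hb. cbv beta in Hb.
  rewrite rprod_const, pow1, Rmult_1_l, (rsum_ext _ _ (fun _ => 1)), rsum_const, Rmult_1_r in Hb
    by (intros; ring).
  exact Hb.
Qed.

(** Weights [alpha_i = sqrt k_i] for two blocks:
    [k0^(k0/2) k1^(k1/2) |L(x^k0 y^k1)| <= K m^(m/2)]. *)
Lemma two_block_weighted k0 k1 xs : length xs = 2%nat -> (k0 + k1 = m)%nat ->
  Forall (fun x => vnorm x <= 1) xs ->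
  sqrt (INR k0) ^ k0 * sqrt (INR k1) ^ k1 * vnorm (L (block_tuple xs [k0; k1]))
  <= K * sqrt (INR m) ^ m.
Proof.
  intros Hxs Hsum Hf.
  set (alpha := fun i => sqrt (INR (nth i [k0; k1] 0%nat))).
  pose proof (block_bound X Y m 2 L K hL hm ltac:(lia) HK [k0; k1] xs alpha eq_refl Hxs
                ltac:(simpl; lia) Hf ltac:(intros; apply sqrt_pos)) as Hb.
  replace (rsum 2 (fun i => alpha i * alpha i)) with (INR m) in Hb
    by (simpl; unfold alpha; simpl; rewrite !sqrt_sqrt, <- Hsum, plus_INR by apply pos_INR; ring).
  replace (rprod m (fun j => alpha (blk [k0; k1] j))) with (sqrt (INR k0) ^ k0 * sqrt (INR k1) ^ k1)
    in Hb; [exact Hb|].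
  rewrite <- Hsum, rprod_split, <- !rprod_const. f_equal; apply rprod_ext; intros j Hj;
    unfold alpha, blk.
  - destruct (Nat.ltb_spec j k0); [reflexivity|lia].
  - destruct (Nat.ltb_spec (k0 + j) k0); [lia|].
    destruct (Nat.ltb_spec (k0 + j - k0) k1); [reflexivity|lia].
Qed.

(** For odd [m], every two-block value is at most [K * two_const m]:
    square [two_block_weighted] and use [m^m + 1 <= 2^m k0^k0 k1^k1]. *)
Lemma two_block_le k0 k1 xs : Nat.odd m = true -> length xs = 2%nat -> (k0 + k1 = m)%nat ->
  Forall (fun x => vnorm x <= 1) xs ->
  vnorm (L (block_tuple xs [k0; k1])) <= K * two_const m.
Proof.
  intros Hodd Hxs Hsum Hf.
  pose proof (two_block_weighted k0 k1 xs Hxs Hsum Hf) as Hb.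
  set (P := sqrt (INR k0) ^ k0 * sqrt (INR k1) ^ k1) in Hb.
  set (r := vnorm (L (block_tuple xs [k0; k1]))) in *.
  set (mm := INR m ^ m).
  assert (HK0 : 0 <= K) by (apply (hat_norm_nonneg X Y m L (proj1 hL) (proj1 (proj2 hL))); auto).
  assert (Hr0 : 0 <= r) by apply vnorm_nonneg.
  assert (HP0 : 0 <= P) by (apply Rmult_le_pos; apply pow_le, sqrt_pos).
  assert (Hs0 : 0 <= sqrt (INR m) ^ m) by (apply pow_le, sqrt_pos).
  assert (Hmm : 0 < mm) by (apply pow_lt, lt_0_INR; lia).
  assert (KI : mm + 1 <= 2 ^ m * (P * P)).
  { pose proof (le_INR _ _ (two_block_ineq m k0 k1 Hsum Hodd hm)) as KI.
    rewrite plus_INR, !mult_INR, !pow_INR in KI. simpl (INR 2) in KI. simpl (INR 1) in KI.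
    replace (1 + 1) with 2 in KI by ring. unfold P.
    replace (sqrt (INR k0) ^ k0 * sqrt (INR k1) ^ k1 * (sqrt (INR k0) ^ k0 * sqrt (INR k1) ^ k1))
      with ((sqrt (INR k0) ^ k0 * sqrt (INR k0) ^ k0) * (sqrt (INR k1) ^ k1 * sqrt (INR k1) ^ k1))
      by ring.
    rewrite !sqrt_pow_sq by apply pos_INR. unfold mm. lra. }
  assert (H1 : (P * r) * (P * r) <= (K * sqrt (INR m) ^ m) * (K * sqrt (INR m) ^ m))
    by (apply Rmult_le_compat; try lra; apply Rmult_le_pos; lra).
  assert (Hsm : sqrt (INR m) ^ m * sqrt (INR m) ^ m = mm) by (apply sqrt_pow_sq, pos_INR).
  assert (H2 : r * r * (mm + 1) <= K * K * 2 ^ m * mm).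
  { pose proof (pow_le 2 m ltac:(lra)).
    apply Rle_trans with (2 ^ m * ((P * r) * (P * r))); [nra|].
    replace (K * K * 2 ^ m * mm)
      with (2 ^ m * ((K * sqrt (INR m) ^ m) * (K * sqrt (INR m) ^ m))) by (rewrite <- Hsm; ring).
    apply Rmult_le_compat_l; lra. }
  assert (H3 : r * r <= (K * two_const m) * (K * two_const m)).
  { replace ((K * two_const m) * (K * two_const m)) with (K * K * (two_const m * two_const m))
      by ring.
    rewrite two_const_sq. fold mm. apply (Rmult_le_reg_r (mm + 1)); [lra|].
    replace (K * K * (2 ^ m * mm / (mm + 1)) * (mm + 1)) with (K * K * 2 ^ m * mm)
      by (field; lra). exact H2. }
  assert (0 <= K * two_const m) by (apply Rmult_le_pos; [lra|apply sqrt_pos]). nra.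
Qed.

Lemma two_norm_le normn : Nat.odd m = true -> is_lub (n_norm_set m 2 L) normn ->
  normn <= K * two_const m.
Proof.
  intros Hodd Hn. apply (proj2 Hn). intros r [ks [xs [Hks [Hxs [Hsum [Hf ->]]]]]].
  destruct ks as [|k0 [|k1 [|]]]; simpl in Hks; try lia.
  apply two_block_le; auto. simpl in Hsum. lia.
Qed.

End NormBounds.

Theorem mainTheorem2 (X Y : NormedSpace) (m n : nat) (L : (nat -> X) -> Y)
  (hm : (1 <= m)%nat) (hn : (2 <= n)%nat)
  (hL : is_csm X Y m L)
  (hnz : exists x : X, hat L x <> vzero)
  (normhat normn : R)
  (Hhat : is_lub (hat_norm_set L) normhat)
  (Hn : is_lub (n_norm_set m n L) normn) :
  Rpower (normn / normhat) (/ INR m) <= sqrt (INR n) /\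
  (n = 2%nat -> Nat.odd m = true -> Rpower (normn / normhat) (/ INR m) < sqrt 2).
Proof.
  pose proof (hat_norm_pos X Y m L (proj1 hL) (proj1 (proj2 hL)) normhat hm Hhat hnz) as HK.
  split.
  - apply root_ratio_le; [exact hm| exact HK| |].
    + rewrite <- sqrt_1. apply sqrt_le_1_alt, (le_INR 1). lia.
    + apply (n_norm_le X Y m n L normhat hL hm Hhat); [lia| exact Hn].
  - intros -> Hodd. apply root_ratio_lt; [exact hm| exact HK| |].
    + rewrite <- sqrt_1. apply sqrt_lt_1_alt. lra.
    + apply Rle_lt_trans with (normhat * two_const m).
      * exact (two_norm_le X Y m L normhat hL hm Hhat normn Hodd Hn).
      * apply Rmult_lt_compat_l; [exact HK| apply two_const_lt].
Qed.
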